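(* Let $N\ge2$, let $\mathbf{A}\in\mathbb{R}^{q\times N}$ with $q<N$ have full row rank, let $\vec u\in\mathbb{R}^N$, $b=\mathbf{A}\vec u$, let $m<M$, $\alpha>0$, $\gamma>0$, $\lambda\in(0,2]$, and assume $\Lambda_1\cap\Lambda_2\ne\emptyset$ where $\Lambda_1=\{\vec x:\mathbf{A}\vec x=b\}$, $\Lambda_2=\{\vec x: m\le x_i\le M\ \forall i\}$. Let $\vec x^\ast$ be the unique minimizer of $\frac{\alpha}{2}\|\vec x-\vec u\|_2^2$ over $\Lambda_1\cap\Lambda_2$, let $i_1,\dots,i_r$ be the indices $j$ with $x^\ast_j\in\{m,M\}$, and let $\mathbf{B}=[\vec e_{i_1},\dots,\vec e_{i_r}]^{\mathsf T}\in\mathbb{R}^{r\times N}$ be the corresponding selector matrix ($\vec e_i$ the standard basis of $\mathbb{R}^N$). Let $\mathcal Q=Q_1\times\cdots\times Q_N$ with $Q_i=[M,+\infty)$ if $x_i^\ast=M$, $Q_i=(m,M)$ if $x^\ast_i\in(m,M)$, $Q_i=(-\infty,m]$ if $x^\ast_i=m$. Let $\mathrm{T}_\gamma=\frac{\lambda}{\gamma\alpha+1}\mathrm{P}\circ(2\mathrm{S}-\mathrm{I})+(\mathrm{I}-\lambda\mathrm{S})+\frac{\lambda\gamma\alpha}{\gamma\alpha+1}\vec u$, with $\mathrm{P}(\vec x)=\mathbf{A}^+(b-\mathbf{A}\vec x)+\vec x$, $\mathbf{A}^+=\mathbf{A}^{\mathsf T}(\mathbf{A}\mathbf{A}^{\mathsf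 T})^{-1}$, $[\mathrm{S}(\vec x)]_i=\min(\max(x_i,m),M)$. Then for any $\vec y$ in the interior of $\mathcal Q$ and any fixed point $\vec y^\ast$ of $\mathrm{T}_\gamma$ lying in the interior of $\mathcal Q$, $$\mathrm{T}_\gamma(\vec y)-\mathrm{T}_\gamma(\vec y^\ast)=\mathbf{T}_{c,\lambda}(\vec y-\vec y^\ast),$$ where $c=\frac{1}{\gamma\alpha+1}\in(0,1)$ and $$\mathbf{T}_{c,\lambda}=\lambda\Big(c(\mathbf{I}_N-\mathbf{A}^+\mathbf{A})(\mathbf{I}_N-\mathbf{B}^+\mathbf{B})+c\,\mathbf{A}^+\mathbf{A}\mathbf{B}^+\mathbf{B}+(1-c)\mathbf{B}^+\mathbf{B}\Big)+(1-\lambda)\mathbf{I}_N,$$ with $\mathbf{B}^+=\mathbf{B}^{\mathsf T}(\mathbf{B}\mathbf{B}^{\mathsf T})^{-1}$ (so $\mathbf{B}^+\mathbf{B}$ is the orthogonal projection onto $\mathrm{span}\{\vec e_{i_1},\dots,\vec e_{i_r}\}$, and is $0$ if $r=0$).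
   Context: $\mathbf{I}_N$ is the $N\times N$ identity matrix; $\mathrm{I}$ the identity operator. $\mathrm{T}_\gamma$ is the iteration operator of the generalized Douglas--Rachford splitting for minimizing $f+g$ with $f=\frac{\alpha}{2}\|\cdot-\vec u\|_2^2+\iota_{\Lambda_1}$ and $g=\iota_{\Lambda_2}$ ($\iota$ denoting indicator functions). *)

From HB Require Import structures.
From mathcomp Require Import all_boot all_order all_algebra.
Set Implicit Arguments. Unset Strict Implicit. Unset Printing Implicit Defensive.
Import Order.TTheory GRing.Theory Num.Theory.
Local Open Scope ring_scope.

Section Defs.
Variable R : realFieldType.

Definition pinv (p n : nat) (X : 'M[R]_(p, n)) : 'M[R]_(n, p) :=
  X^T *m invmx (X *m X^T).

Definition sqnorm (n : nat) (x : 'cV[R]_n) : R := \sum_(i < n) (x i 0) ^+ 2.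

Definition Lambda1 (q n : nat) (A : 'M[R]_(q, n)) (b : 'cV[R]_q) (x : 'cV[R]_n) : Prop :=
  A *m x = b.

Definition Lambda2 (n : nat) (m M : R) (x : 'cV[R]_n) : Prop :=
  forall i, m <= x i 0 <= M.

Definition objective (n : nat) (alpha : R) (u x : 'cV[R]_n) : R :=
  alpha / 2 * sqnorm (x - u).

Definition is_minimizer (q n : nat) (A : 'M[R]_(q, n)) (b : 'cV[R]_q)
    (m M alpha : R) (u xs : 'cV[R]_n) : Prop :=
  [/\ Lambda1 A b xs, Lambda2 m M xs &
      forall x, Lambda1 A b x -> Lambda2 m M x ->
        objective alpha u xs <= objective alpha u x].

Definition active (n : nat) (m M : R) (xs : 'cV[R]_n) : {set 'I_n} :=
  [set j | (xs j 0 == m) || (xs j 0 == M)].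

(* selector matrix B = [e_{i_1}, ..., e_{i_r}]^T, with i_1 < ... < i_r the
   active indices (enumerated in increasing order by enum_val) *)
Definition selector (n : nat) (m M : R) (xs : 'cV[R]_n)
    : 'M[R]_(#|active m M xs|, n) :=
  \matrix_(k < #|active m M xs|, j < n) (j == enum_val k)%:R.

Definition in_int_Q (n : nat) (m M : R) (xs y : 'cV[R]_n) : Prop :=
  forall i,
    [/\ xs i 0 = M -> M < y i 0,
        m < xs i 0 < M -> m < y i 0 < M &
        xs i 0 = m -> y i 0 < m].

Definition Sbox (n : nat) (m M : R) (x : 'cV[R]_n) : 'cV[R]_n :=
  \col_i Num.min (Num.max (x i 0) m) M.

Definition Paff (q n : nat) (A : 'M[R]_(q, n)) (b : 'cV[R]_q) (x : 'cV[R]_n)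
    : 'cV[R]_n :=
  pinv A *m (b - A *m x) + x.

Definition Tgamma (q n : nat) (A : 'M[R]_(q, n)) (b : 'cV[R]_q) (m M alpha gamma lambda : R)
    (u y : 'cV[R]_n) : 'cV[R]_n :=
  (lambda / (gamma * alpha + 1)) *: Paff A b (2%:R *: Sbox m M y - y)
  + (y - lambda *: Sbox m M y)
  + (lambda * gamma * alpha / (gamma * alpha + 1)) *: u.

Definition Tmat (q n r : nat) (A : 'M[R]_(q, n)) (B : 'M[R]_(r, n)) (c lambda : R)
    : 'M[R]_n :=
  lambda *: (c *: ((1%:M - pinv A *m A) *m (1%:M - pinv B *m B))
             + c *: (pinv A *m A *m (pinv B *m B))
             + (1 - c) *: (pinv B *m B))
  + (1 - lambda) *: 1%:M.

End Defs.

From HB Require Import structures.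
From mathcomp Require Import all_boot all_order all_algebra.
From mathcomp Require Import ring.
Set Implicit Arguments. Unset Strict Implicit.
Import Order.TTheory GRing.Theory Num.Theory.
Local Open Scope ring_scope.

(* On the interior of Q the clamp S freezes the active coordinates at their
   values in x^* and is the identity on the free ones, so
   S(y) - S(z) = (I - B^+ B)(y - z) for y, z in the interior.  Since P is
   affine with linear part I - A^+ A, the map T_gamma is affine there, and
   regrouping its linear part gives T_{c,lambda}. *)

Section Selector.
Variables (R : realFieldType) (n : nat) (m M : R) (xs : 'cV[R]_n).
Local Notation B := (selector m M xs).

Lemma selector_mul_tr : B *m B^T = 1%:M.
Proof.
apply/matrixP => k l; rewrite !mxE (bigD1 (enum_val k)) //= big1 ?addr0.
  by rewrite !mxE eqxx (inj_eq enum_val_inj) eq_sym mul1r.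
by move=> j /negbTE Hj; rewrite !mxE Hj mul0r.
Qed.

Lemma pinv_selector : pinv B = B^T.
Proof. by rewrite /pinv selector_mul_tr invmx1 mulmx1. Qed.

Lemma pinv_selector_mul :
  pinv B *m B = diag_mx (\row_i (i \in active m M xs)%:R).
Proof.
apply/matrixP => i k; rewrite pinv_selector !mxE.
have [Hi | Hi] := boolP (i \in active m M xs); last first.
  rewrite mul0rn big1 // => l _; rewrite !mxE.
  by case: eqP => [Ei | _]; [move: Hi; rewrite Ei enum_valP | rewrite mul0r].
rewrite (bigD1 (enum_rank_in Hi i)) //= big1 ?addr0.
  by rewrite !mxE enum_rankK_in // eqxx mul1r eq_sym mulr1n.
move=> l Hl; rewrite !mxE.
case: eqP => [Ei | _]; last by rewrite mul0r.
have Ei' : enum_val l = enum_val (enum_rank_in Hi i) by rewrite enum_rankK_in.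
by rewrite (enum_val_inj Ei') eqxx in Hl.
Qed.

End Selector.

Section Clamp.
Variables (R : realFieldType) (n : nat) (m M : R) (xs : 'cV[R]_n).
Hypotheses (lt_mM : m < M) (xs_box : Lambda2 m M xs).

Lemma Sbox_interior y : in_int_Q m M xs y ->
  Sbox m M y = \col_i (if i \in active m M xs then xs i 0 else y i 0).
Proof.
move=> y_int; apply/matrixP => i j; rewrite (ord1 j) !mxE inE.
have [y_up y_mid y_low] := y_int i.
have [xs_m | xs_neq_m] /= := eqVneq (xs i 0) m.
  have y_lt := y_low xs_m.
  by rewrite xs_m (max_idPr (ltW y_lt)) (min_idPl (ltW lt_mM)).
have [xs_M | xs_neq_M] /= := eqVneq (xs i 0) M.
  have y_gt := y_up xs_M.
  by rewrite xs_M (max_idPl (ltW (lt_trans lt_mM y_gt))) (min_idPr (ltW y_gt)).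
have /andP[xs_ge xs_le] := xs_box i.
have /y_mid /andP[y_gt y_lt] : m < xs i 0 < M.
  by rewrite !lt_neqAle xs_ge xs_le eq_sym xs_neq_m xs_neq_M.
by rewrite (max_idPl (ltW y_gt)) (min_idPl (ltW y_lt)).
Qed.

Lemma Sbox_sub_interior y ys : in_int_Q m M xs y -> in_int_Q m M xs ys ->
  Sbox m M y - Sbox m M ys
  = (1%:M - pinv (selector m M xs) *m selector m M xs) *m (y - ys).
Proof.
move=> y_int ys_int; rewrite (Sbox_interior y_int) (Sbox_interior ys_int).
rewrite pinv_selector_mul mulmxBl mul1mx mul_diag_mx.
apply/matrixP => i j; rewrite (ord1 j) !mxE.
by case: (i \in active m M xs); rewrite ?mul1r ?mul0r ?subrr ?subr0.
Qed.

End Clamp.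

Section Iteration.
Variables (R : realFieldType) (q n : nat) (A : 'M[R]_(q, n)) (b : 'cV[R]_q).

Lemma Paff_sub x x' :
  Paff A b x - Paff A b x' = (1%:M - pinv A *m A) *m (x - x').
Proof.
rewrite /Paff !mulmxBr !mulmxBl !mul1mx !mulmxA.
apply/matrixP => i j; rewrite !mxE; ring.
Qed.

Lemma Tgamma_sub (m M alpha gamma lambda : R) (u y ys : 'cV[R]_n) :
  let dS := Sbox m M y - Sbox m M ys in
  Tgamma A b m M alpha gamma lambda u y - Tgamma A b m M alpha gamma lambda u ys
  = (lambda / (gamma * alpha + 1))
      *: ((1%:M - pinv A *m A) *m (2%:R *: dS - (y - ys)))
    + ((y - ys) - lambda *: dS).
Proof.
rewrite /= /Tgamma.
move: (Sbox m M y) (Sbox m M ys) => S S'.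
have -> : 2%:R *: (S - S') - (y - ys) = (2%:R *: S - y) - (2%:R *: S' - ys).
  by apply/matrixP => i j; rewrite !mxE; ring.
rewrite -Paff_sub.
move: (Paff A b _) (Paff A b _) => P P'.
apply/matrixP => i j; rewrite !mxE; ring.
Qed.

(* A polynomial identity in P = A^+ A and D = B^+ B: no projection property
   of P or D is used. *)
Lemma Tmat_mulmx r (Bm : 'M[R]_(r, n)) (c lambda : R) (d : 'cV[R]_n) :
  let D := 1%:M - pinv Bm *m Bm in
  Tmat A Bm c lambda *m d
  = (lambda * c) *: ((1%:M - pinv A *m A) *m (2%:R *: (D *m d) - d))
    + (d - lambda *: (D *m d)).
Proof.
rewrite /= /Tmat.
move: (pinv A *m A) (pinv Bm *m Bm) => P D.
do !rewrite ?(mulmxDr, mulmxBr, mulmxDl, mulmxBl, mulNmx, mulmxN, mulmxA,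
              mul1mx, mulmx1) -?scalemxAl -?scalemxAr.
apply/matrixP => i j; rewrite !mxE; ring.
Qed.

End Iteration.

Theorem lemma2p2 (R : realFieldType) (N q : nat) (A : 'M[R]_(q, N))
    (u : 'cV[R]_N) (m M alpha gamma lambda : R) (xs y ys : 'cV[R]_N) :
  (2 <= N)%N -> (q < N)%N -> \rank A = q ->
  m < M -> 0 < alpha -> 0 < gamma -> 0 < lambda <= 2 ->
  (exists x, Lambda1 A (A *m u) x /\ Lambda2 m M x) ->
  is_minimizer A (A *m u) m M alpha u xs ->
  in_int_Q m M xs y ->
  in_int_Q m M xs ys ->
  Tgamma A (A *m u) m M alpha gamma lambda u ys = ys ->
  Tgamma A (A *m u) m M alpha gamma lambda u y
    - Tgamma A (A *m u) m M alpha gamma lambda u ys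
  = Tmat A (selector m M xs) (1 / (gamma * alpha + 1)) lambda *m (y - ys).
Proof.
move=> _ _ _ lt_mM _ _ _ _ [_ xs_box _] y_int ys_int _.
by rewrite Tgamma_sub (Sbox_sub_interior lt_mM xs_box y_int ys_int) Tmat_mulmx mul1r.
Qed.
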